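(* Let $(M^n,g)$ be a Riemannian manifold with Levi-Civita connection which is semisymmetric, i.e. $[\nabla_a,\nabla_b] R_{cdef}=0$. Then $$R_{abc}{}^m R_{dme}{}^f+R_{bcd}{}^m R_{ame}{}^f+R_{cda}{}^m R_{bme}{}^f+R_{dab}{}^m R_{cme}{}^f - R_{ace}{}^m R_{bdm}{}^f + R_{acm}{}^f R_{bde}{}^m =0,$$ $$R_{am}R_{bce}{}^m + R_{bm}R_{cae}{}^m+ R_{cm}R_{abe}{}^m =0,$$ $$R_{am} R_{bec}{}^m - R_{bm}R_{ace}{}^m + R_{cm} R_{eba}{}^m -R_{em} R_{cab}{}^m =0 .$$
   Context: Abstract index notation with Einstein summation; indices lowered with $g$, $R_{abcd}=R_{abc}{}^eg_{ed}$. $R_{abc}{}^d = \partial_a \Gamma_{bc}^d - \partial_b\Gamma_{ac}^d - \Gamma_{ac}^k\Gamma_{bk}^d + \Gamma_{ak}^d \Gamma_{bc}^k$, $R_{ac}=R_{abc}{}^b$, $[\nabla_a,\nabla_b]=\nabla_a\nabla_b-\nabla_b\nabla_a$. *)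

From Stdlib Require Import Reals List Arith ClassicalEpsilon.
Import ListNotations.
Open Scope R_scope.

(* Points of R^n are represented as nat -> R; only coordinates k < n matter
   (continuity below forces functions to be independent of coordinates >= n). *)
Definition pt := nat -> R.

Fixpoint sm (n : nat) (f : nat -> R) : R :=
  match n with O => 0 | S m => sm m f + f m end.

Definition shift (x : pt) (i : nat) (t : R) : pt :=
  fun k => if Nat.eqb k i then x k + t else x k.

(* partial derivative d/dx^i (chosen value of the limit when it exists) *)
Definition pd (i : nat) (f : pt -> R) (x : pt) : R :=
  epsilon (inhabits 0) (fun l => derivable_pt_lim (fun t => f (shift x i t)) 0 l).

Fixpoint iterpd (ds : list nat) (f : pt -> R) : pt -> R :=
  match ds with [] => f | i :: ds' => pd i (iterpd ds' f) end.

Definition cont_at (n : nat) (f : pt -> R) (x : pt) : Prop :=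
  forall eps, eps > 0 -> exists delta, delta > 0 /\
    forall y : pt, (forall k, (k < n)%nat -> Rabs (y k - x k) < delta) ->
      Rabs (f y - f x) < eps.

Definition smooth (n : nat) (f : pt -> R) : Prop :=
  forall ds : list nat, (forall i, In i ds -> (i < n)%nat) ->
    (forall x, cont_at n (iterpd ds f) x) /\
    (forall i x, (i < n)%nat ->
       exists l, derivable_pt_lim (fun t => iterpd ds f (shift x i t)) 0 l).

Definition metric := nat -> nat -> pt -> R.

Definition riemannian (n : nat) (g ginv : metric) : Prop :=
  (forall i j, (i < n)%nat -> (j < n)%nat -> smooth n (g i j)) /\
  (forall i j, (i < n)%nat -> (j < n)%nat -> smooth n (ginv i j)) /\
  (forall i j x, g i j x = g j i x) /\
  (forall x (v : nat -> R), (exists k, (k < n)%nat /\ v k <> 0) ->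
     sm n (fun i => sm n (fun j => g i j x * v i * v j)) > 0) /\
  (forall i j x, (i < n)%nat -> (j < n)%nat ->
     sm n (fun k => ginv i k x * g k j x) = if Nat.eqb i j then 1 else 0).

Definition Gam (n : nat) (g ginv : metric) (i j k : nat) (x : pt) : R :=
  / 2 * sm n (fun l => ginv k l x *
        (pd i (g j l) x + pd j (g i l) x - pd l (g i j) x)).

Definition Rup (n : nat) (g ginv : metric) (a b c d : nat) (x : pt) : R :=
  pd a (Gam n g ginv b c d) x - pd b (Gam n g ginv a c d) x
  - sm n (fun k => Gam n g ginv a c k x * Gam n g ginv b k d x)
  + sm n (fun k => Gam n g ginv a k d x * Gam n g ginv b c k x).

Definition Rdown (n : nat) (g ginv : metric) (a b c d : nat) (x : pt) : R :=
  sm n (fun e => Rup n g ginv a b c e x * g e d x).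

Definition Ric (n : nat) (g ginv : metric) (a c : nat) (x : pt) : R :=
  sm n (fun b => Rup n g ginv a b c b x).

(* covariant tensor fields, indexed by the list of their (lower) indices *)
Definition tensor := list nat -> pt -> R.

(* sum over the slots of idx of  Gamma_{a c}^m T_{.. m ..}  (c = index in that slot) *)
Fixpoint corr (n : nat) (G : nat -> nat -> nat -> pt -> R) (a : nat) (T : tensor)
  (pre suf : list nat) (x : pt) : R :=
  match suf with
  | [] => 0
  | c :: s => sm n (fun m => G a c m x * T (pre ++ m :: s) x)
              + corr n G a T (pre ++ [c]) s x
  end.

(* Levi-Civita covariant derivative: (cov T) (a :: idx) = nabla_a T_idx *)
Definition cov (n : nat) (g ginv : metric) (T : tensor) : tensor :=
  fun l x => match l with
  | [] => 0
  | a :: idx => pd a (T idx) x - corr n (Gam n g ginv) a T [] idx x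
  end.

Definition Rtens (n : nat) (g ginv : metric) : tensor :=
  fun l x => match l with
  | [c; d; e; f] => Rdown n g ginv c d e f x
  | _ => 0
  end.

Definition semisymmetric (n : nat) (g ginv : metric) : Prop :=
  forall a b c d e f x, (a < n)%nat -> (b < n)%nat -> (c < n)%nat ->
    (d < n)%nat -> (e < n)%nat -> (f < n)%nat ->
    cov n g ginv (cov n g ginv (Rtens n g ginv)) [a; b; c; d; e; f] x
    - cov n g ginv (cov n g ginv (Rtens n g ginv)) [b; a; c; d; e; f] x = 0.

(* The three identities are algebraic consequences of semisymmetry once commutators of
   covariant derivatives are expressed through the curvature.  The Ricci identity
   [nabla_a, nabla_b] T_{c_1...c_k} = - sum_i R_{a b c_i}^p T_{c_1..p..c_k} turns semisymmetry
   into (R(d_a, d_b) . R)_{cdef} = 0 and, applied to the parallel metric, yields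
   R_{abcd} = - R_{abdc}; raising f gives a quadratic identity in R_{abc}^d.  By the first
   Bianchi identity, the first claimed identity is a signed sum of three instances of it; its
   trace combined with Bianchi gives the second, and the third is the sum of two instances of
   the second. *)

From Stdlib Require Import Reals List Lia Lra FunctionalExtensionality ClassicalEpsilon.
From Coquelicot Require Derive Derive_2d Continuity Hierarchy.
Import ListNotations.
Open Scope R_scope.

(** * Finite sums *)

Lemma sm_ext N f g : (forall k, (k < N)%nat -> f k = g k) -> sm N f = sm N g.
Proof.
  induction N as [|N IH]; intros H; simpl; [reflexivity|].
  rewrite IH by (intros; apply H; lia). rewrite H by lia. reflexivity.
Qed.

Lemma sm_plus N f g : sm N (fun k => f k + g k) = sm N f + sm N g.
Proof. induction N as [|N IH]; simpl; [lra|]. rewrite IH. lra. Qed.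

Lemma sm_minus N f g : sm N (fun k => f k - g k) = sm N f - sm N g.
Proof. induction N as [|N IH]; simpl; [lra|]. rewrite IH. lra. Qed.

Lemma sm_opp N f : sm N (fun k => - f k) = - sm N f.
Proof. induction N as [|N IH]; simpl; [lra|]. rewrite IH. lra. Qed.

Lemma sm_scal_l N c f : sm N (fun k => c * f k) = c * sm N f.
Proof. induction N as [|N IH]; simpl; [lra|]. rewrite IH. lra. Qed.

Lemma sm_scal_r N c f : sm N (fun k => f k * c) = sm N f * c.
Proof. induction N as [|N IH]; simpl; [lra|]. rewrite IH. lra. Qed.

Lemma sm_eq0 N f : (forall k, (k < N)%nat -> f k = 0) -> sm N f = 0.
Proof. induction N as [|N IH]; intros H; simpl; [lra|]. rewrite IH, H by auto. lra. Qed.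

Lemma sm_swap N M F :
  sm N (fun i => sm M (fun j => F i j)) = sm M (fun j => sm N (fun i => F i j)).
Proof.
  induction N as [|N IH]; simpl.
  - symmetry. apply sm_eq0. reflexivity.
  - rewrite IH, <- sm_plus. reflexivity.
Qed.

Lemma sm_S_l N f : sm (S N) f = f 0%nat + sm N (fun k => f (S k)).
Proof. induction N as [|N IH]; simpl in *; [lra|]. rewrite IH. lra. Qed.

Lemma sm_kronecker N k f :
  (k < N)%nat -> sm N (fun i => (if Nat.eqb i k then 1 else 0) * f i) = f k.
Proof.
  induction N as [|N IH]; intros Hk; [lia|]. simpl.
  destruct (Nat.eq_dec k N) as [->|Hne].
  - rewrite Nat.eqb_refl, sm_eq0; [lra|].
    intros j Hj. destruct (Nat.eqb_spec j N); [lia|lra].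
  - rewrite IH by lia. destruct (Nat.eqb_spec N k); [lia|lra].
Qed.

Lemma sm_split_at N k F : (k < N)%nat ->
  sm N F = F k + sm N (fun j => if Nat.eqb j k then 0 else F j).
Proof.
  induction N as [|N IH]; intros Hk; [lia|]. simpl.
  destruct (Nat.eq_dec k N) as [->|Hne].
  - rewrite Nat.eqb_refl, (sm_ext N (fun j => if Nat.eqb j N then 0 else F j) F); [lra|].
    intros j Hj. destruct (Nat.eqb_spec j N); [lia|reflexivity].
  - rewrite IH by lia. destruct (Nat.eqb_spec N k); [lia|lra].
Qed.

(** * Partial derivatives and smoothness *)

Lemma pd_eq i f x l :
  derivable_pt_lim (fun t => f (shift x i t)) 0 l -> pd i f x = l.
Proof.
  intros H. unfold pd.
  assert (E : exists l, derivable_pt_lim (fun t => f (shift x i t)) 0 l) by eauto.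
  eapply uniqueness_limite; [apply (epsilon_spec (inhabits 0) _ E)|exact H].
Qed.

Lemma iterpd_app ds i f : iterpd (ds ++ [i]) f = iterpd ds (pd i f).
Proof. induction ds as [|j ds IH]; simpl; [reflexivity|]. rewrite IH. reflexivity. Qed.

Definition cont_pdiff n f := (forall x, cont_at n f x) /\
  (forall i x, (i < n)%nat -> exists l, derivable_pt_lim (fun t => f (shift x i t)) 0 l).

Definition smooth_upto n (k : nat) f := forall ds, (length ds <= k)%nat ->
  (forall i, In i ds -> (i < n)%nat) -> cont_pdiff n (iterpd ds f).

Lemma smooth_upto_all n f : smooth n f <-> forall k, smooth_upto n k f.
Proof.
  split.
  - intros H k ds _ Hds. apply H, Hds.
  - intros H ds Hds. apply (H (length ds) ds); auto.
Qed.

Lemma smooth_upto_0 n f : smooth_upto n 0 f <-> cont_pdiff n f.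
Proof.
  split.
  - intros H. apply (H []); simpl; [lia|tauto].
  - intros H [|i ds] Hl _; simpl in *; [exact H|lia].
Qed.

Lemma smooth_upto_S n k f : smooth_upto n (S k) f <->
  cont_pdiff n f /\ forall i, (i < n)%nat -> smooth_upto n k (pd i f).
Proof.
  split.
  - intros H. split.
    + apply (H []); simpl; [lia|tauto].
    + intros i Hi ds Hl Hds. rewrite <- iterpd_app. apply H.
      * rewrite length_app; simpl; lia.
      * intros j Hj. apply in_app_or in Hj as [Hj|[<-|[]]]; auto.
  - intros [H0 H] ds Hl Hds.
    destruct ds as [|j ds0]; [exact H0|].
    destruct (exists_last (l := j :: ds0) ltac:(discriminate)) as [ds' [i E]].
    rewrite E in *. rewrite iterpd_app. rewrite length_app in Hl. simpl in Hl.
    apply H.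
    + apply Hds, in_or_app. simpl; auto.
    + lia.
    + intros m Hm. apply Hds, in_or_app. auto.
Qed.

Lemma smooth_upto_le n k k' f : (k' <= k)%nat -> smooth_upto n k f -> smooth_upto n k' f.
Proof. intros Hk H ds Hl Hds. apply H; auto; lia. Qed.

Lemma cont_const n c x : cont_at n (fun _ => c) x.
Proof. intros eps He. exists 1. split; [lra|]. intros y _. rewrite Rminus_diag, Rabs_R0. lra. Qed.

Lemma cont_plus n f g x :
  cont_at n f x -> cont_at n g x -> cont_at n (fun y => f y + g y) x.
Proof.
  intros Hf Hg eps He.
  destruct (Hf (eps/2)) as [d1 [Hd1 H1]]; [lra|].
  destruct (Hg (eps/2)) as [d2 [Hd2 H2]]; [lra|].
  exists (Rmin d1 d2). split; [apply Rmin_pos; auto|].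
  intros y Hy.
  assert (A1 : Rabs (f y - f x) < eps/2).
  { apply H1. intros k Hk. specialize (Hy k Hk). pose proof (Rmin_l d1 d2). lra. }
  assert (A2 : Rabs (g y - g x) < eps/2).
  { apply H2. intros k Hk. specialize (Hy k Hk). pose proof (Rmin_r d1 d2). lra. }
  replace (f y + g y - (f x + g x)) with ((f y - f x) + (g y - g x)) by ring.
  pose proof (Rabs_triang (f y - f x) (g y - g x)). lra.
Qed.

Lemma cont_mult n f g x :
  cont_at n f x -> cont_at n g x -> cont_at n (fun y => f y * g y) x.
Proof.
  intros Hf Hg eps He.
  set (A := Rabs (f x) + 1). set (B := Rabs (g x) + 1).
  assert (HA : A > 0) by (unfold A; pose proof (Rabs_pos (f x)); lra).
  assert (HB : B > 0) by (unfold B; pose proof (Rabs_pos (g x)); lra).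
  destruct (Hf (eps/(2*B))) as [d1 [Hd1 H1]]; [apply Rdiv_lt_0_compat; lra|].
  destruct (Hg (Rmin 1 (eps/(2*A)))) as [d2 [Hd2 H2]].
  { apply Rmin_pos; [lra|]. apply Rdiv_lt_0_compat; lra. }
  exists (Rmin d1 d2). split; [apply Rmin_pos; auto|].
  intros y Hy.
  assert (A1 : Rabs (f y - f x) < eps/(2*B)).
  { apply H1. intros k Hk. specialize (Hy k Hk). pose proof (Rmin_l d1 d2). lra. }
  assert (A2 : Rabs (g y - g x) < Rmin 1 (eps/(2*A))).
  { apply H2. intros k Hk. specialize (Hy k Hk). pose proof (Rmin_r d1 d2). lra. }
  pose proof (Rmin_l 1 (eps/(2*A))). pose proof (Rmin_r 1 (eps/(2*A))).
  assert (Gy : Rabs (g y) <= B).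
  { unfold B. replace (g y) with (g x + (g y - g x)) by ring.
    pose proof (Rabs_triang (g x) (g y - g x)). lra. }
  assert (T1 : Rabs (f y - f x) * Rabs (g y) < eps/2).
  { apply Rle_lt_trans with (Rabs (f y - f x) * B).
    - apply Rmult_le_compat_l; [apply Rabs_pos|exact Gy].
    - replace (eps/2) with (eps/(2*B) * B) by (field; lra). apply Rmult_lt_compat_r; lra. }
  assert (T2 : Rabs (f x) * Rabs (g y - g x) <= eps/2).
  { replace (eps/2) with (A * (eps/(2*A))) by (field; lra).
    assert (Rabs (f x) <= A) by (unfold A; lra).
    apply Rmult_le_compat; try apply Rabs_pos; lra. }
  replace (f y * g y - f x * g x) with ((f y - f x) * g y + f x * (g y - g x)) by ring.
  eapply Rle_lt_trans; [apply Rabs_triang|]. rewrite !Rabs_mult. lra.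
Qed.

Lemma pd_derivable n f i x : cont_pdiff n f -> (i < n)%nat ->
  derivable_pt_lim (fun t => f (shift x i t)) 0 (pd i f x).
Proof.
  intros [_ H] Hi. destruct (H i x Hi) as [l Hl]. rewrite (pd_eq _ _ _ l Hl). exact Hl.
Qed.

Lemma shift_0 y i : shift y i 0 = y.
Proof. apply functional_extensionality. intros k. unfold shift. destruct (Nat.eqb k i); lra. Qed.

Lemma cont_pdiff_const n c : cont_pdiff n (fun _ => c).
Proof.
  split; [intros; apply cont_const|]. intros i x _. exists 0.
  apply (derivable_pt_lim_const c 0).
Qed.

Lemma cont_pdiff_plus n f g :
  cont_pdiff n f -> cont_pdiff n g -> cont_pdiff n (fun y => f y + g y).
Proof.
  intros Hf Hg. split.
  - intros x. apply cont_plus; [apply Hf|apply Hg].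
  - intros i x Hi. eexists.
    apply (derivable_pt_lim_plus (fun t => f (shift x i t)) (fun t => g (shift x i t)));
      apply (pd_derivable n); auto.
Qed.

Lemma cont_pdiff_minus n f g :
  cont_pdiff n f -> cont_pdiff n g -> cont_pdiff n (fun y => f y - g y).
Proof.
  intros Hf Hg. split.
  - intros x. apply (cont_plus n f (fun y => - g y)); [apply Hf|].
    intros eps He. destruct (proj1 Hg x eps He) as [d [Hd H]].
    exists d. split; [exact Hd|]. intros y Hy.
    replace (- g y - - g x) with (- (g y - g x)) by ring. rewrite Rabs_Ropp. auto.
  - intros i x Hi. eexists.
    apply (derivable_pt_lim_minus (fun t => f (shift x i t)) (fun t => g (shift x i t)));
      apply (pd_derivable n); auto.
Qed.

Lemma cont_pdiff_mult n f g :
  cont_pdiff n f -> cont_pdiff n g -> cont_pdiff n (fun y => f y * g y).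
Proof.
  intros Hf Hg. split.
  - intros x. apply cont_mult; [apply Hf|apply Hg].
  - intros i x Hi. eexists.
    apply (derivable_pt_lim_mult (fun t => f (shift x i t)) (fun t => g (shift x i t)));
      apply (pd_derivable n); auto.
Qed.

Lemma pd_const i c : pd i (fun _ => c) = fun _ => 0.
Proof.
  apply functional_extensionality. intros x. apply pd_eq, (derivable_pt_lim_const c 0).
Qed.

Lemma pd_plus n i f g : cont_pdiff n f -> cont_pdiff n g -> (i < n)%nat ->
  pd i (fun y => f y + g y) = fun y => pd i f y + pd i g y.
Proof.
  intros Hf Hg Hi. apply functional_extensionality. intros x. apply pd_eq.
  apply (derivable_pt_lim_plus (fun t => f (shift x i t)) (fun t => g (shift x i t)));
    apply (pd_derivable n); auto.
Qed.

Lemma pd_minus n i f g : cont_pdiff n f -> cont_pdiff n g -> (i < n)%nat ->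
  pd i (fun y => f y - g y) = fun y => pd i f y - pd i g y.
Proof.
  intros Hf Hg Hi. apply functional_extensionality. intros x. apply pd_eq.
  apply (derivable_pt_lim_minus (fun t => f (shift x i t)) (fun t => g (shift x i t)));
    apply (pd_derivable n); auto.
Qed.

Lemma pd_mult n i f g : cont_pdiff n f -> cont_pdiff n g -> (i < n)%nat ->
  pd i (fun y => f y * g y) = fun y => pd i f y * g y + f y * pd i g y.
Proof.
  intros Hf Hg Hi. apply functional_extensionality. intros x. apply pd_eq.
  pose proof (derivable_pt_lim_mult (fun t => f (shift x i t)) (fun t => g (shift x i t)) 0 _ _
    (pd_derivable n f i x Hf Hi) (pd_derivable n g i x Hg Hi)) as H.
  unfold mult_fct in H. rewrite shift_0 in H. exact H.
Qed.

Lemma pd_sm n i N F : (forall j, (j < N)%nat -> cont_pdiff n (F j)) -> (i < n)%nat ->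
  pd i (fun y => sm N (fun j => F j y)) = fun y => sm N (fun j => pd i (F j) y).
Proof.
  induction N as [|N IH]; intros H Hi; simpl; [apply pd_const|].
  assert (HN : cont_pdiff n (fun y => sm N (fun j => F j y))).
  { clear IH. induction N as [|N IH]; simpl; [apply cont_pdiff_const|].
    apply cont_pdiff_plus; auto. }
  rewrite (pd_plus n), IH; auto.
Qed.

Lemma smooth_upto_const n k c : smooth_upto n k (fun _ => c).
Proof.
  revert c. induction k as [|k IH]; intros c.
  - apply smooth_upto_0, cont_pdiff_const.
  - apply smooth_upto_S. split; [apply cont_pdiff_const|]. intros i Hi. rewrite pd_const. apply IH.
Qed.

Lemma smooth_upto_plus n k f g :
  smooth_upto n k f -> smooth_upto n k g -> smooth_upto n k (fun y => f y + g y).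
Proof.
  revert f g. induction k as [|k IH]; intros f g Hf Hg.
  - apply smooth_upto_0, cont_pdiff_plus; apply smooth_upto_0; assumption.
  - apply smooth_upto_S in Hf as [Hf0 Hf], Hg as [Hg0 Hg].
    apply smooth_upto_S. split; [apply cont_pdiff_plus; auto|].
    intros i Hi. rewrite (pd_plus n) by auto. auto.
Qed.

Lemma smooth_upto_minus n k f g :
  smooth_upto n k f -> smooth_upto n k g -> smooth_upto n k (fun y => f y - g y).
Proof.
  revert f g. induction k as [|k IH]; intros f g Hf Hg.
  - apply smooth_upto_0, cont_pdiff_minus; apply smooth_upto_0; assumption.
  - apply smooth_upto_S in Hf as [Hf0 Hf], Hg as [Hg0 Hg].
    apply smooth_upto_S. split; [apply cont_pdiff_minus; auto|].
    intros i Hi. rewrite (pd_minus n) by auto. auto.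
Qed.

Lemma smooth_upto_mult n k f g :
  smooth_upto n k f -> smooth_upto n k g -> smooth_upto n k (fun y => f y * g y).
Proof.
  revert f g. induction k as [|k IH]; intros f g Hf Hg.
  - apply smooth_upto_0, cont_pdiff_mult; apply smooth_upto_0; assumption.
  - assert (Hfk : smooth_upto n k f) by (apply (smooth_upto_le n (S k)); auto).
    assert (Hgk : smooth_upto n k g) by (apply (smooth_upto_le n (S k)); auto).
    apply smooth_upto_S in Hf as [Hf0 Hf], Hg as [Hg0 Hg].
    apply smooth_upto_S. split; [apply cont_pdiff_mult; auto|].
    intros i Hi. rewrite (pd_mult n) by auto. apply smooth_upto_plus; auto.
Qed.

Lemma smooth_const n c : smooth n (fun _ => c).
Proof. apply smooth_upto_all. intros; apply smooth_upto_const. Qed.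

Lemma smooth_plus n f g : smooth n f -> smooth n g -> smooth n (fun y => f y + g y).
Proof. rewrite !smooth_upto_all. intros; apply smooth_upto_plus; auto. Qed.

Lemma smooth_minus n f g : smooth n f -> smooth n g -> smooth n (fun y => f y - g y).
Proof. rewrite !smooth_upto_all. intros; apply smooth_upto_minus; auto. Qed.

Lemma smooth_mult n f g : smooth n f -> smooth n g -> smooth n (fun y => f y * g y).
Proof. rewrite !smooth_upto_all. intros; apply smooth_upto_mult; auto. Qed.

Lemma smooth_sm n N F :
  (forall j, (j < N)%nat -> smooth n (F j)) -> smooth n (fun y => sm N (fun j => F j y)).
Proof.
  induction N as [|N IH]; intros H; simpl; [apply smooth_const|].
  apply smooth_plus; auto.
Qed.

Lemma smooth_pd n i f : (i < n)%nat -> smooth n f -> smooth n (pd i f).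
Proof.
  rewrite !smooth_upto_all. intros Hi H k.
  specialize (H (S k)). apply smooth_upto_S in H as [_ H]. auto.
Qed.

Lemma smooth_cont_pdiff n f : smooth n f -> cont_pdiff n f.
Proof. intros H. apply smooth_upto_0, smooth_upto_all, H. Qed.

Lemma shift_shift y j v s : shift (shift y j v) j s = shift y j (v + s).
Proof. apply functional_extensionality. intros k. unfold shift. destruct (Nat.eqb k j); lra. Qed.

Lemma shift_comm y i j u v : shift (shift y i u) j v = shift (shift y j v) i u.
Proof.
  apply functional_extensionality. intros k. unfold shift.
  destruct (Nat.eqb k i), (Nat.eqb k j); lra.
Qed.

Lemma derivable_pt_lim_translate h v l :
  derivable_pt_lim (fun s => h (v + s)) 0 l -> derivable_pt_lim h v l.
Proof.
  intros H eps He. destruct (H eps He) as [d Hd]. exists d. intros s Hs0 Hs.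
  specialize (Hd s Hs0 Hs). simpl in Hd.
  rewrite Rplus_0_l, Rplus_0_r in Hd. exact Hd.
Qed.

Lemma derivable_along_shift n f y j v : cont_pdiff n f -> (j < n)%nat ->
  derivable_pt_lim (fun t => f (shift y j t)) v (pd j f (shift y j v)).
Proof.
  intros Hf Hj. apply derivable_pt_lim_translate.
  replace (fun s => f (shift y j (v + s))) with (fun s => f (shift (shift y j v) j s)).
  - apply (pd_derivable n); auto.
  - apply functional_extensionality. intros s. rewrite shift_shift. reflexivity.
Qed.

Lemma Derive_of_lim (h : R -> R) v l : derivable_pt_lim h v l -> Derive.Derive h v = l.
Proof. intros H. apply Derive.is_derive_unique, Derive.is_derive_Reals, H. Qed.

Lemma ex_derive_of_lim (h : R -> R) v l :
  derivable_pt_lim h v l -> @Derive.ex_derive Hierarchy.R_AbsRing Hierarchy.R_NormedModule h v.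
Proof. intros H. exists l. apply Derive.is_derive_Reals, H. Qed.

Lemma continuity_2d_shift n h x i j : (i < n)%nat -> (j < n)%nat -> i <> j ->
  cont_at n h x -> Continuity.continuity_2d_pt (fun u v => h (shift (shift x i u) j v)) 0 0.
Proof.
  intros Hi Hj Hij Hh eps.
  destruct (Hh eps (cond_pos eps)) as [d [Hd H]].
  exists (mkposreal d Hd). intros u v Hu Hv. simpl in *.
  rewrite !shift_0. apply H. intros k Hk. unfold shift.
  destruct (Nat.eqb_spec k i), (Nat.eqb_spec k j); try lia.
  - replace (x k + u - x k) with (u - 0) by ring. exact Hu.
  - replace (x k + v - x k) with (v - 0) by ring. exact Hv.
  - rewrite Rminus_diag, Rabs_R0. exact Hd.
Qed.

(* Reduced to Coquelicot's Schwarz theorem along the plane spanned by the axes i and j. *)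
Lemma pd_comm n f i j x : smooth n f -> (i < n)%nat -> (j < n)%nat ->
  pd i (pd j f) x = pd j (pd i f) x.
Proof.
  intros Hf Hi Hj.
  destruct (Nat.eq_dec i j) as [->|Hij]; [reflexivity|].
  set (P := fun u v => shift (shift x i u) j v).
  set (F := fun u v => f (P u v)).
  assert (Sf : cont_pdiff n f) by (apply smooth_cont_pdiff; auto).
  assert (Sfi : cont_pdiff n (pd i f)) by (apply smooth_cont_pdiff, smooth_pd; auto).
  assert (Sfj : cont_pdiff n (pd j f)) by (apply smooth_cont_pdiff, smooth_pd; auto).
  assert (D2 : forall h, cont_pdiff n h -> forall u v,
             derivable_pt_lim (fun t => h (P u t)) v (pd j h (P u v))).
  { intros h Hh u v. apply (derivable_along_shift n); auto. }
  assert (D1 : forall h, cont_pdiff n h -> forall u v,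
             derivable_pt_lim (fun z => h (P z v)) u (pd i h (P u v))).
  { intros h Hh u v. unfold P. rewrite shift_comm.
    replace (fun z => h (shift (shift x i z) j v))
      with (fun z => h (shift (shift x j v) i z)).
    - apply (derivable_along_shift n); auto.
    - apply functional_extensionality; intros z. rewrite shift_comm. reflexivity. }
  assert (E1 : forall v, (fun z => Derive.Derive (fun t => F z t) v) = fun z => pd j f (P z v)).
  { intros v. apply functional_extensionality; intros z. apply Derive_of_lim, D2, Sf. }
  assert (E2 : forall u, (fun z => Derive.Derive (fun t => F t z) u) = fun z => pd i f (P u z)).
  { intros u. apply functional_extensionality; intros z. apply Derive_of_lim, D1, Sf. }
  assert (E12 : (fun u v => Derive.Derive (fun z => Derive.Derive (fun t => F z t) v) u)
                = fun u v => pd i (pd j f) (P u v)).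
  { do 2 (apply functional_extensionality; intros). rewrite E1. apply Derive_of_lim, D1, Sfj. }
  assert (E21 : (fun u v => Derive.Derive (fun z => Derive.Derive (fun t => F t z) u) v)
                = fun u v => pd j (pd i f) (P u v)).
  { do 2 (apply functional_extensionality; intros). rewrite E2. apply Derive_of_lim, D2, Sfi. }
  pose proof (Derive_2d.Schwarz F 0 0) as S.
  rewrite (equal_f (equal_f E12 0) 0), (equal_f (equal_f E21 0) 0) in S.
  unfold P in S. rewrite !shift_0 in S. apply S.
  - exists (mkposreal 1 Rlt_0_1). intros u v _ _.
    rewrite E1, E2. repeat split; eapply ex_derive_of_lim;
      [apply (D1 f)|apply (D2 f)|apply (D1 (pd j f))|apply (D2 (pd i f))]; assumption.
  - rewrite E12. apply (continuity_2d_shift n); auto.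
    apply (Hf [i; j]). intros m [<-|[<-|[]]]; auto.
  - rewrite E21. apply (continuity_2d_shift n); auto.
    apply (Hf [j; i]). intros m [<-|[<-|[]]]; auto.
Qed.

(** * The Levi-Civita connection *)

Section LeviCivita.
Variables (n : nat) (g ginv : metric).
Hypothesis HR : riemannian n g ginv.

Local Notation Gm := (Gam n g ginv).
Local Notation Rm := (Rup n g ginv).

Lemma g_smooth i j : (i < n)%nat -> (j < n)%nat -> smooth n (g i j).
Proof. apply HR. Qed.

Lemma ginv_smooth i j : (i < n)%nat -> (j < n)%nat -> smooth n (ginv i j).
Proof. apply HR. Qed.

Lemma g_sym i j x : g i j x = g j i x.
Proof. apply HR. Qed.

Lemma g_sym_fun i j : g i j = g j i.
Proof. apply functional_extensionality. intros; apply g_sym. Qed.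

Lemma ginv_g i j x : (i < n)%nat -> (j < n)%nat ->
  sm n (fun k => ginv i k x * g k j x) = if Nat.eqb i j then 1 else 0.
Proof. apply HR. Qed.

(* Both sides equal the double contraction of ginv g ginv. *)
Lemma ginv_sym i j x : (i < n)%nat -> (j < n)%nat -> ginv i j x = ginv j i x.
Proof.
  intros Hi Hj.
  set (S := sm n (fun k => sm n (fun l => ginv i k x * g k l x * ginv j l x))).
  assert (Ei : S = ginv i j x).
  { unfold S. transitivity (sm n (fun k => (if Nat.eqb k j then 1 else 0) * ginv i k x));
      [|apply sm_kronecker; auto].
    apply sm_ext. intros k Hk.
    rewrite Nat.eqb_sym, <- (ginv_g j k x), <- sm_scal_r by auto.
    apply sm_ext. intros l _. rewrite (g_sym k l). ring. }
  assert (Ej : S = ginv j i x).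
  { unfold S. rewrite sm_swap.
    transitivity (sm n (fun l => (if Nat.eqb l i then 1 else 0) * ginv j l x));
      [|apply sm_kronecker; auto].
    apply sm_ext. intros l Hl.
    rewrite Nat.eqb_sym, <- (ginv_g i l x) by auto. rewrite <- sm_scal_r.
    apply sm_ext. intros k _. ring. }
  congruence.
Qed.

Lemma g_ginv i j x : (i < n)%nat -> (j < n)%nat ->
  sm n (fun k => g i k x * ginv k j x) = if Nat.eqb i j then 1 else 0.
Proof.
  intros Hi Hj. rewrite Nat.eqb_sym, <- (ginv_g j i x) by auto. apply sm_ext. intros k Hk.
  rewrite (g_sym i k), (ginv_sym k j) by auto. ring.
Qed.

Lemma Gam_sym i j : Gm i j = Gm j i.
Proof.
  do 2 (apply functional_extensionality; intros). unfold Gam. f_equal.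
  apply sm_ext. intros l _. rewrite (g_sym_fun j i). ring.
Qed.

Lemma Gam_smooth i j k : (i < n)%nat -> (j < n)%nat -> (k < n)%nat -> smooth n (Gm i j k).
Proof.
  intros Hi Hj Hk. unfold Gam. apply smooth_mult; [apply smooth_const|].
  apply smooth_sm. intros l Hl. apply smooth_mult; [apply ginv_smooth; auto|].
  apply smooth_minus; [apply smooth_plus|]; apply smooth_pd; auto; apply g_smooth; auto.
Qed.

Lemma Rup_smooth a b c d : (a < n)%nat -> (b < n)%nat -> (c < n)%nat -> (d < n)%nat ->
  smooth n (Rm a b c d).
Proof.
  intros Ha Hb Hc Hd. unfold Rup.
  apply smooth_plus; [apply smooth_minus; [apply smooth_minus|]|].
  1,2: apply smooth_pd, Gam_smooth; auto.
  all: apply smooth_sm; intros k Hk; apply smooth_mult; apply Gam_smooth; auto.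
Qed.

Lemma Rdown_smooth a b c d : (a < n)%nat -> (b < n)%nat -> (c < n)%nat -> (d < n)%nat ->
  smooth n (Rdown n g ginv a b c d).
Proof.
  intros Ha Hb Hc Hd. apply smooth_sm. intros e He.
  apply smooth_mult; [apply Rup_smooth|apply g_smooth]; auto.
Qed.

Lemma Rup_antisym a b c d x : Rm a b c d x = - Rm b a c d x.
Proof.
  unfold Rup.
  rewrite (sm_ext n (fun k => Gm b c k x * Gm a k d x) (fun k => Gm a k d x * Gm b c k x)),
    (sm_ext n (fun k => Gm b k d x * Gm a c k x) (fun k => Gm a c k x * Gm b k d x))
    by (intros; ring).
  ring.
Qed.

Lemma Rup_bianchi a b c d x : Rm a b c d x + Rm b c a d x + Rm c a b d x = 0.
Proof.
  unfold Rup. rewrite (Gam_sym c a), (Gam_sym b a), (Gam_sym c b).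
  rewrite (sm_ext n (fun k => Gm b k d x * Gm a c k x) (fun k => Gm a c k x * Gm b k d x)),
    (sm_ext n (fun k => Gm c k d x * Gm a b k x) (fun k => Gm a b k x * Gm c k d x)),
    (sm_ext n (fun k => Gm a k d x * Gm b c k x) (fun k => Gm b c k x * Gm a k d x))
    by (intros; ring).
  ring.
Qed.

Lemma Gam_lower b c d y : (b < n)%nat -> (c < n)%nat -> (d < n)%nat ->
  sm n (fun m => Gm b c m y * g m d y) =
  / 2 * (pd b (g c d) y + pd c (g b d) y - pd d (g b c) y).
Proof.
  intros Hb Hc Hd. unfold Gam.
  set (A := fun l => pd b (g c l) y + pd c (g b l) y - pd l (g b c) y).
  transitivity (sm n (fun m => sm n (fun l => / 2 * (ginv m l y * A l) * g m d y))).
  { apply sm_ext. intros m _. rewrite <- sm_scal_l, <- sm_scal_r. reflexivity. }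
  rewrite sm_swap.
  transitivity (sm n (fun l => (if Nat.eqb l d then 1 else 0) * (/ 2 * A l)));
    [|apply sm_kronecker; auto].
  apply sm_ext. intros l Hl. rewrite <- (ginv_g l d y), <- sm_scal_r by auto.
  apply sm_ext. intros m Hm. rewrite (ginv_sym m l) by auto. ring.
Qed.

Lemma metric_compat b c d y : (b < n)%nat -> (c < n)%nat -> (d < n)%nat ->
  pd b (g c d) y = sm n (fun m => Gm b c m y * g m d y)
                 + sm n (fun m => Gm b d m y * g c m y).
Proof.
  intros Hb Hc Hd.
  rewrite (sm_ext n (fun m => Gm b d m y * g c m y) (fun m => Gm b d m y * g m c y))
    by (intros; rewrite g_sym; reflexivity).
  rewrite !Gam_lower, (g_sym_fun d c) by auto. field.
Qed.

End LeviCivita.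

(** * The Ricci identity *)

Fixpoint replace_at (l : list nat) (k m : nat) : list nat :=
  match l, k with
  | [], _ => []
  | _ :: t, O => m :: t
  | h :: t, S k' => h :: replace_at t k' m
  end.

Lemma replace_at_length l k m : length (replace_at l k m) = length l.
Proof. revert k; induction l; intros [|k]; simpl; auto. Qed.

Lemma nth_replace_at_same l k m : (k < length l)%nat -> nth k (replace_at l k m) 0%nat = m.
Proof. revert k; induction l; intros [|k] H; simpl in *; try lia; auto. apply IHl. lia. Qed.

Lemma nth_replace_at_other l k j m : j <> k -> nth j (replace_at l k m) 0%nat = nth j l 0%nat.
Proof.
  revert k j; induction l; intros [|k] [|j] H; simpl; auto; lia.
Qed.

Lemma replace_at_idem l k m p : replace_at (replace_at l k m) k p = replace_at l k p.
Proof. revert k; induction l; intros [|k]; simpl; auto. rewrite IHl. reflexivity. Qed.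

Lemma replace_at_comm l k j m p : j <> k ->
  replace_at (replace_at l k m) j p = replace_at (replace_at l j p) k m.
Proof.
  revert k j; induction l; intros [|k] [|j] H; simpl; auto; try lia.
  rewrite IHl by lia. reflexivity.
Qed.

Lemma in_replace_at l k m i : In i (replace_at l k m) -> In i l \/ i = m.
Proof.
  revert k; induction l; intros [|k] H; simpl in *; auto.
  - destruct H; auto.
  - destruct H as [H|H]; auto. destruct (IHl k H); auto.
Qed.

Definition in_range (n : nat) (J : list nat) := forall i, In i J -> (i < n)%nat.

Lemma in_range_replace_at n J k m :
  in_range n J -> (m < n)%nat -> in_range n (replace_at J k m).
Proof. intros H Hm i Hi. destruct (in_replace_at J k m i Hi); subst; auto. Qed.

Lemma in_range_nth n J k : in_range n J -> (k < length J)%nat -> (nth k J 0%nat < n)%nat.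
Proof. intros H Hk. apply H, nth_In, Hk. Qed.

Lemma corr_as_sum n G a T pre suf x :
  corr n G a T pre suf x =
  sm (length suf) (fun k => sm n (fun m =>
    G a (nth k suf 0%nat) m x * T (pre ++ replace_at suf k m) x)).
Proof.
  revert pre. induction suf as [|c s IH]; intros pre; [reflexivity|].
  cbn [corr]. rewrite IH. change (length (c :: s)) with (S (length s)).
  rewrite (sm_S_l (length s)). cbn [nth replace_at]. f_equal.
  apply sm_ext. intros k _. apply sm_ext. intros m _. rewrite <- app_assoc. reflexivity.
Qed.

(* The second covariant derivative at a point, as a polynomial in the values of T, of its
   first and second partial derivatives, and of the Christoffel symbols and their partial
   derivatives; the antisymmetrisation in [a b] is then pure algebra. *)
Section SecondCovariantDerivative.
Variables (n : nat) (I : list nat) (T : list nat -> R) (G : nat -> nat -> nat -> R).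

Local Notation L := (length I).
Local Notation "I [ k := m ]" := (replace_at I k m) (at level 8, format "I [ k := m ]").
Local Notation idx k := (nth k I 0%nat).

(* [dGa], [dTa], [dTb] stand for the partial derivatives of G and T along a and b, [dd]
   for the second derivative [pd a (pd b T_I)] and [sG] for the term [G_ab^m nabla_m T_I]. *)
Definition cov2 a b (dGa : nat -> nat -> nat -> R) (dTa dTb : list nat -> R) (dd sG : R) :=
  dd - sm L (fun k => sm n (fun m => dGa b (idx k) m * T I[k := m] + G b (idx k) m * dTa I[k := m]))
  - sG
  - sm L (fun k => sm n (fun m => G a (idx k) m *
      (dTb I[k := m] - sm L (fun j => sm n (fun p =>
         G b (nth j I[k := m] 0%nat) p * T (I[k := m])[j := p]))))).

Definition double_corr a b := sm L (fun k => sm n (fun m => G a (idx k) m *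
  sm L (fun j => sm n (fun p => G b (nth j I[k := m] 0%nat) p * T (I[k := m])[j := p])))).

Definition double_corr_diag a b := sm L (fun k => sm n (fun p =>
  sm n (fun m => G a (idx k) m * G b m p) * T I[k := p])).

Definition double_corr_offdiag a b := sm L (fun k => sm n (fun m => sm L (fun j => sm n (fun p =>
  if Nat.eqb j k then 0 else G a (idx k) m * G b (idx j) p * T (I[k := m])[j := p])))).

Lemma double_corr_split a b : double_corr a b = double_corr_diag a b + double_corr_offdiag a b.
Proof.
  unfold double_corr, double_corr_diag, double_corr_offdiag.
  rewrite <- sm_plus. apply sm_ext. intros k Hk.
  transitivity (sm n (fun m => sm n (fun p => G a (idx k) m * G b m p * T I[k := p]))
    + sm n (fun m => sm L (fun j => sm n (fun p =>
        if Nat.eqb j k then 0 else G a (idx k) m * G b (idx j) p * T (I[k := m])[j := p])))).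
  - rewrite <- sm_plus. apply sm_ext. intros m _.
    rewrite (sm_split_at L k) by auto. rewrite nth_replace_at_same by auto.
    rewrite Rmult_plus_distr_l. f_equal.
    + rewrite <- sm_scal_l. apply sm_ext. intros p _. rewrite replace_at_idem. ring.
    + rewrite <- sm_scal_l. apply sm_ext. intros j Hj.
      destruct (Nat.eqb_spec j k).
      * rewrite Rmult_0_r. symmetry. apply sm_eq0. reflexivity.
      * rewrite <- sm_scal_l. apply sm_ext. intros p _.
        rewrite nth_replace_at_other by auto. ring.
  - f_equal. rewrite sm_swap. apply sm_ext. intros p _. rewrite <- sm_scal_r. reflexivity.
Qed.

Lemma double_corr_offdiag_sym a b : double_corr_offdiag a b = double_corr_offdiag b a.
Proof.
  unfold double_corr_offdiag. symmetry.
  transitivity (sm L (fun k => sm L (fun j => sm n (fun m => sm n (fun p =>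
    if Nat.eqb j k then 0 else G b (idx k) m * G a (idx j) p * T (I[k := m])[j := p]))))).
  { apply sm_ext; intros k _. apply sm_swap. }
  rewrite sm_swap. apply sm_ext; intros j Hj.
  transitivity (sm n (fun p => sm L (fun k => sm n (fun m =>
    if Nat.eqb j k then 0 else G b (idx k) m * G a (idx j) p * T (I[k := m])[j := p])))).
  { etransitivity; [apply sm_ext; intros k _; apply sm_swap|]. apply sm_swap. }
  apply sm_ext; intros p _. apply sm_ext; intros k _. apply sm_ext; intros m _.
  rewrite Nat.eqb_sym. destruct (Nat.eqb_spec k j); [reflexivity|].
  rewrite replace_at_comm by auto. ring.
Qed.

(* Since [dd] and [sG] are the same on both sides (by Schwarz and the symmetry of G), they
   cancel; the mixed first-order terms cancel in pairs, and of the second-order terms only the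
   diagonal ones survive. *)
Lemma cov2_antisym a b dGa dGb dTa dTb dd sG :
  cov2 a b dGa dTa dTb dd sG - cov2 b a dGb dTb dTa dd sG =
  - sm L (fun k => sm n (fun p =>
      (dGa b (idx k) p - dGb a (idx k) p
       - sm n (fun m => G a (idx k) m * G b m p)
       + sm n (fun m => G a m p * G b (idx k) m)) * T I[k := p])).
Proof.
  assert (Hdc : forall a' b' (dT : list nat -> R),
    sm L (fun k => sm n (fun m => G a' (idx k) m *
      (dT I[k := m] - sm L (fun j => sm n (fun p =>
         G b' (nth j I[k := m] 0%nat) p * T (I[k := m])[j := p])))))
    = sm L (fun k => sm n (fun m => G a' (idx k) m * dT I[k := m])) - double_corr a' b').
  { intros. unfold double_corr. rewrite <- sm_minus. apply sm_ext. intros k _.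
    rewrite <- sm_minus. apply sm_ext. intros m _. ring. }
  assert (Hsplit : forall F F' : nat -> nat -> R,
    sm L (fun k => sm n (fun m => F k m + F' k m)) =
    sm L (fun k => sm n (fun m => F k m)) + sm L (fun k => sm n (fun m => F' k m))).
  { intros F F'. rewrite <- sm_plus. apply sm_ext; intros k _. apply sm_plus. }
  assert (Hrhs : sm L (fun k => sm n (fun p =>
      (dGa b (idx k) p - dGb a (idx k) p
       - sm n (fun m => G a (idx k) m * G b m p)
       + sm n (fun m => G a m p * G b (idx k) m)) * T I[k := p]))
    = sm L (fun k => sm n (fun p => dGa b (idx k) p * T I[k := p]))
    - sm L (fun k => sm n (fun p => dGb a (idx k) p * T I[k := p]))
    - double_corr_diag a b + double_corr_diag b a).
  { unfold double_corr_diag. rewrite <- !sm_minus, <- !sm_plus. apply sm_ext; intros k _.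
    rewrite <- !sm_minus, <- !sm_plus. apply sm_ext; intros p _.
    rewrite (sm_ext n (fun m => G b (idx k) m * G a m p) (fun m => G a m p * G b (idx k) m))
      by (intros; ring).
    ring. }
  unfold cov2. rewrite !Hdc, !double_corr_split, (double_corr_offdiag_sym a b), Hrhs.
  rewrite (Hsplit (fun k m => dGa b (idx k) m * T I[k := m])
                  (fun k m => G b (idx k) m * dTa I[k := m])),
          (Hsplit (fun k m => dGb a (idx k) m * T I[k := m])
                  (fun k m => G a (idx k) m * dTb I[k := m])).
  ring.
Qed.

End SecondCovariantDerivative.

Section RicciIdentity.
Variables (n : nat) (g ginv : metric).
Hypothesis HR : riemannian n g ginv.
Variable T : tensor.
Hypothesis HT : forall J, in_range n J -> smooth n (T J).

Local Notation Gm := (Gam n g ginv).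
Local Notation cv := (cov n g ginv).

Lemma corr_fun b pre suf :
  (fun y => corr n Gm b T pre suf y) =
  (fun y => sm (length suf) (fun k => sm n (fun m =>
     Gm b (nth k suf 0%nat) m y * T (pre ++ replace_at suf k m) y))).
Proof. apply functional_extensionality. intros y. apply corr_as_sum. Qed.

Lemma corr_summand_smooth b J k m : (b < n)%nat -> in_range n J -> (k < length J)%nat ->
  (m < n)%nat -> smooth n (fun y => Gm b (nth k J 0%nat) m y * T (replace_at J k m) y).
Proof.
  intros Hb HJ Hk Hm. apply smooth_mult.
  - apply (Gam_smooth n g ginv HR); auto. apply in_range_nth; auto.
  - apply HT, in_range_replace_at; auto.
Qed.

Lemma corr_smooth b J : (b < n)%nat -> in_range n J -> smooth n (fun y => corr n Gm b T [] J y).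
Proof.
  intros Hb HJ. rewrite corr_fun. apply smooth_sm. intros k Hk. apply smooth_sm. intros m Hm.
  apply corr_summand_smooth; auto.
Qed.

Lemma pd_corr a b J x : (a < n)%nat -> (b < n)%nat -> in_range n J ->
  pd a (fun y => corr n Gm b T [] J y) x =
  sm (length J) (fun k => sm n (fun m =>
     pd a (Gm b (nth k J 0%nat) m) x * T (replace_at J k m) x
     + Gm b (nth k J 0%nat) m x * pd a (T (replace_at J k m)) x)).
Proof.
  intros Ha Hb HJ. rewrite corr_fun. simpl.
  rewrite (pd_sm n); auto.
  - apply sm_ext. intros k Hk. rewrite (pd_sm n); auto.
    + apply sm_ext. intros m Hm. rewrite (pd_mult n); auto.
      * apply smooth_cont_pdiff, (Gam_smooth n g ginv HR); auto. apply in_range_nth; auto.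
      * apply smooth_cont_pdiff, HT, in_range_replace_at; auto.
    + intros m Hm. apply smooth_cont_pdiff, corr_summand_smooth; auto.
  - intros k Hk. apply smooth_cont_pdiff, smooth_sm. intros m Hm.
    apply corr_summand_smooth; auto.
Qed.

Lemma cov_cov_eq_cov2 a b I x : (a < n)%nat -> (b < n)%nat -> in_range n I ->
  cv (cv T) (a :: b :: I) x =
  cov2 n I (fun J => T J x) (fun i j k => Gm i j k x) a b
    (fun i j k => pd a (Gm i j k) x) (fun J => pd a (T J) x) (fun J => pd b (T J) x)
    (pd a (pd b (T I)) x) (sm n (fun m => Gm a b m x * cv T (m :: I) x)).
Proof.
  intros Ha Hb HI.
  change (cv (cv T) (a :: b :: I) x) with
    (pd a (fun y => pd b (T I) y - corr n Gm b T [] I y) x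
     - corr n Gm a (cv T) [] (b :: I) x).
  rewrite (pd_minus n), pd_corr; auto.
  2: apply smooth_cont_pdiff, smooth_pd, HT; auto.
  2: apply smooth_cont_pdiff, corr_smooth; auto.
  cbn [corr]. rewrite corr_as_sum. cbn [app]. unfold cov2.
  rewrite (sm_ext (length I)
    (fun k => sm n (fun m => Gm a (nth k I 0%nat) m x * cv T (b :: replace_at I k m) x))
    (fun k => sm n (fun m => Gm a (nth k I 0%nat) m x *
      (pd b (T (replace_at I k m)) x - sm (length I) (fun j => sm n (fun p =>
      Gm b (nth j (replace_at I k m) 0%nat) p x * T (replace_at (replace_at I k m) j p) x)))))).
  - ring.
  - intros k _. apply sm_ext. intros m _. simpl. rewrite corr_as_sum, replace_at_length.
    reflexivity.
Qed.

Lemma ricci_identity a b I x : (a < n)%nat -> (b < n)%nat -> in_range n I ->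
  cv (cv T) (a :: b :: I) x - cv (cv T) (b :: a :: I) x =
  - sm (length I) (fun k => sm n (fun p =>
      Rup n g ginv a b (nth k I 0%nat) p x * T (replace_at I k p) x)).
Proof.
  intros Ha Hb HI. rewrite !cov_cov_eq_cov2 by auto.
  rewrite (pd_comm n (T I) b a x), (Gam_sym n g ginv HR b a) by auto.
  rewrite cov2_antisym. reflexivity.
Qed.

End RicciIdentity.

(** * Curvature identities *)

Section CurvatureSymmetries.
Variables (n : nat) (g ginv : metric).
Hypothesis HR : riemannian n g ginv.

Local Notation Gm := (Gam n g ginv).
Local Notation cv := (cov n g ginv).

Definition metric_tensor : tensor := fun l x => match l with [c; d] => g c d x | _ => 0 end.

Lemma metric_tensor_smooth J : in_range n J -> smooth n (metric_tensor J).
Proof.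
  intros H. destruct J as [|c [|d [|e J]]]; unfold metric_tensor; cbv beta iota; try apply smooth_const.
  apply (g_smooth n g ginv HR); apply H; simpl; tauto.
Qed.

Lemma cov_metric_tensor b c d : (b < n)%nat -> (c < n)%nat -> (d < n)%nat ->
  cv metric_tensor [b; c; d] = fun _ => 0.
Proof.
  intros Hb Hc Hd. apply functional_extensionality. intros y.
  change (pd b (g c d) y - (sm n (fun m => Gm b c m y * g m d y)
     + (sm n (fun m => Gm b d m y * g c m y) + 0)) = 0).
  rewrite (metric_compat n g ginv HR) by auto. ring.
Qed.

(* The Ricci identity applied to the parallel tensor g. *)
Lemma Rdown_antisym a b c d x : (a < n)%nat -> (b < n)%nat -> (c < n)%nat -> (d < n)%nat ->
  Rdown n g ginv a b c d x = - Rdown n g ginv a b d c x.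
Proof.
  intros Ha Hb Hc Hd.
  assert (Hcd : in_range n [c; d]) by (intros i [<-|[<-|[]]]; auto).
  assert (Hpar : forall a' b', (a' < n)%nat -> (b' < n)%nat ->
     cv (cv metric_tensor) [a'; b'; c; d] x = 0).
  { intros a' b' Ha' Hb'.
    change (pd a' (cv metric_tensor [b'; c; d]) x -
       (sm n (fun m => Gm a' b' m x * cv metric_tensor [m; c; d] x)
       + (sm n (fun m => Gm a' c m x * cv metric_tensor [b'; m; d] x)
       + (sm n (fun m => Gm a' d m x * cv metric_tensor [b'; c; m] x) + 0))) = 0).
    rewrite cov_metric_tensor, pd_const by auto.
    rewrite !sm_eq0; [ring| | |]; intros m Hm; rewrite cov_metric_tensor by auto; ring. }
  pose proof (ricci_identity n g ginv HR metric_tensor metric_tensor_smooth a b [c; d] x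
                Ha Hb Hcd) as H.
  rewrite !Hpar in H by auto. simpl in H. unfold Rdown.
  rewrite (sm_ext n (fun e => Rup n g ginv a b d e x * g e c x)
                    (fun e => Rup n g ginv a b d e x * g c e x))
    by (intros; rewrite (g_sym n g ginv HR); reflexivity).
  lra.
Qed.

Lemma Rtens_smooth J : in_range n J -> smooth n (Rtens n g ginv J).
Proof.
  intros H. destruct J as [|c [|d [|e [|f [|h J]]]]]; unfold Rtens; cbv beta iota; try apply smooth_const.
  apply (Rdown_smooth n g ginv HR); apply H; simpl; tauto.
Qed.

Lemma semisymmetric_slots a b c d e f x : semisymmetric n g ginv ->
  (a < n)%nat -> (b < n)%nat -> (c < n)%nat -> (d < n)%nat -> (e < n)%nat -> (f < n)%nat ->
  sm n (fun p => Rup n g ginv a b c p x * Rdown n g ginv p d e f x)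
  + sm n (fun p => Rup n g ginv a b d p x * Rdown n g ginv c p e f x)
  + sm n (fun p => Rup n g ginv a b e p x * Rdown n g ginv c d p f x)
  + sm n (fun p => Rup n g ginv a b f p x * Rdown n g ginv c d e p x) = 0.
Proof.
  intros HS Ha Hb Hc Hd He Hf.
  pose proof (HS a b c d e f x Ha Hb Hc Hd He Hf) as H.
  rewrite (ricci_identity n g ginv HR (Rtens n g ginv) Rtens_smooth a b [c; d; e; f] x)
    in H by (auto; intros i Hi; simpl in Hi; intuition (subst; auto)).
  simpl in H. lra.
Qed.

End CurvatureSymmetries.

Section SemisymmetricIdentities.
Variables (n : nat) (g ginv : metric).
Hypothesis HR : riemannian n g ginv.
Hypothesis HS : semisymmetric n g ginv.
Variable x : pt.

Local Notation U a b c d := (Rup n g ginv a b c d x).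
Local Notation W a b c d := (Rdown n g ginv a b c d x).
Local Notation Ri a b := (Ric n g ginv a b x).

Lemma Rdown_raise a b c f : (f < n)%nat -> sm n (fun q => W a b c q * ginv q f x) = U a b c f.
Proof.
  intros Hf. unfold Rdown.
  transitivity (sm n (fun q => sm n (fun e => U a b c e * (g e q x * ginv q f x)))).
  { apply sm_ext; intros q _. rewrite <- sm_scal_r. apply sm_ext; intros; ring. }
  rewrite sm_swap, <- (sm_kronecker n f (fun e => U a b c e) Hf).
  apply sm_ext; intros e He. rewrite sm_scal_l, (g_ginv n g ginv HR) by auto. ring.
Qed.

Lemma Rup_Rdown_swap a b c d e f :
  sm n (fun m => U a b c m * W d e f m) = sm n (fun m => U d e f m * W a b c m).
Proof.
  unfold Rdown.
  transitivity (sm n (fun m => sm n (fun q => U a b c m * U d e f q * g q m x))).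
  { apply sm_ext; intros m _. rewrite <- sm_scal_l. apply sm_ext; intros; ring. }
  rewrite sm_swap. apply sm_ext; intros q _. rewrite <- sm_scal_l. apply sm_ext; intros m _.
  rewrite (g_sym n g ginv HR q m). ring.
Qed.

Lemma sm_raise (A : nat -> R) (B : nat -> nat -> R) f :
  sm n (fun q => sm n (fun p => A p * B p q) * ginv q f x) =
  sm n (fun p => A p * sm n (fun q => B p q * ginv q f x)).
Proof.
  transitivity (sm n (fun q => sm n (fun p => A p * (B p q * ginv q f x)))).
  { apply sm_ext; intros q _. rewrite <- sm_scal_r. apply sm_ext; intros; ring. }
  rewrite sm_swap. apply sm_ext; intros p _. apply sm_scal_l.
Qed.

(* [sm n (RdotR a b c d e f)] is the component [(R(d_a, d_b) . R)_{cde}^f] of the curvature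
   acting as a derivation on itself, which is what semisymmetry makes vanish. *)
Definition RdotR a b c d e f m :=
  U a b c m * U m d e f + U a b d m * U c m e f + U a b e m * U c d m f
  - U c d e m * U a b m f.

Lemma RdotR_vanishes a b c d e f :
  (a < n)%nat -> (b < n)%nat -> (c < n)%nat -> (d < n)%nat -> (e < n)%nat -> (f < n)%nat ->
  sm n (RdotR a b c d e f) = 0.
Proof.
  intros Ha Hb Hc Hd He Hf.
  assert (Hlast : forall q, (q < n)%nat ->
    sm n (fun p => U a b q p * W c d e p) = - sm n (fun p => U c d e p * W a b p q)).
  { intros q Hq. rewrite Rup_Rdown_swap, <- sm_opp. apply sm_ext; intros p Hp.
    rewrite (Rdown_antisym n g ginv HR) by auto. ring. }
  assert (Hlow : sm n (fun q =>
      sm n (fun p => U a b c p * W p d e q) * ginv q f x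
    + sm n (fun p => U a b d p * W c p e q) * ginv q f x
    + sm n (fun p => U a b e p * W c d p q) * ginv q f x
    - sm n (fun p => U c d e p * W a b p q) * ginv q f x) = 0).
  { apply sm_eq0. intros q Hq.
    rewrite <- !Rmult_plus_distr_r, <- Rmult_minus_distr_r. apply Rmult_eq_0_compat_r.
    pose proof (semisymmetric_slots n g ginv HR a b c d e q x HS Ha Hb Hc Hd He Hq) as H0.
    rewrite Hlast in H0 by auto. lra. }
  rewrite <- Hlow, sm_minus, !sm_plus, !sm_raise. unfold RdotR.
  rewrite sm_minus, !sm_plus.
  f_equal; [f_equal; [f_equal|]|]; apply sm_ext; intros p Hp; rewrite Rdown_raise; auto.
Qed.

Lemma Rup_exchange a b c m : U a b c m = U a c b m - U b c a m.
Proof.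
  pose proof (Rup_bianchi n g ginv HR a b c m x). pose proof (Rup_antisym n g ginv c a b m x).
  lra.
Qed.

Lemma semisymmetric_identity1 a b c d e f : (a < n)%nat -> (b < n)%nat -> (c < n)%nat ->
  (d < n)%nat -> (e < n)%nat -> (f < n)%nat ->
  sm n (fun m => U a b c m * U d m e f)
  + sm n (fun m => U b c d m * U a m e f)
  + sm n (fun m => U c d a m * U b m e f)
  + sm n (fun m => U d a b m * U c m e f)
  - sm n (fun m => U a c e m * U b d m f)
  + sm n (fun m => U a c m f * U b d e m) = 0.
Proof.
  intros Ha Hb Hc Hd He Hf.
  transitivity (- sm n (RdotR a c b d e f) + sm n (RdotR a d b c e f)
                + sm n (RdotR b c a d e f)).
  - rewrite <- sm_opp, <- !sm_plus, <- !sm_minus, <- !sm_plus. apply sm_ext. intros m _.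
    unfold RdotR.
    rewrite (Rup_antisym n g ginv d m e f), (Rup_antisym n g ginv c m e f),
      (Rup_antisym n g ginv d a b m), (Rup_exchange a b c m), (Rup_exchange c d a m),
      (Rup_antisym n g ginv d a c m), (Rup_antisym n g ginv c a d m).
    ring.
  - rewrite !RdotR_vanishes by auto. ring.
Qed.

Lemma RdotR_trace a b c e : (a < n)%nat -> (b < n)%nat -> (c < n)%nat -> (e < n)%nat ->
  sm n (fun m => U a b c m * Ri m e) + sm n (fun m => U a b e m * Ri c m) = 0.
Proof.
  intros Ha Hb Hc He.
  rewrite <- (sm_eq0 n (fun t => sm n (RdotR a b c t e t)))
    by (intros; apply RdotR_vanishes; auto).
  unfold RdotR, Ric. symmetry.
  rewrite (sm_ext n _ (fun t =>
      sm n (fun m => U a b c m * U m t e t) + sm n (fun m => U a b t m * U c m e t)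
    + sm n (fun m => U a b e m * U c t m t) - sm n (fun m => U c t e m * U a b m t)))
    by (intros; rewrite <- !sm_plus, <- sm_minus; reflexivity).
  rewrite sm_minus, !sm_plus.
  assert (Hcancel : sm n (fun t => sm n (fun m => U c t e m * U a b m t)) =
                    sm n (fun t => sm n (fun m => U a b t m * U c m e t))).
  { rewrite sm_swap. apply sm_ext; intros t _. apply sm_ext; intros m _. ring. }
  rewrite Hcancel, (sm_swap n n (fun t m => U a b c m * U m t e t)),
    (sm_swap n n (fun t m => U a b e m * U c t m t)).
  rewrite (sm_ext n (fun m => sm n (fun t => U a b c m * U m t e t))
                    (fun m => U a b c m * sm n (fun t => U m t e t))),
    (sm_ext n (fun m => sm n (fun t => U a b e m * U c t m t))
              (fun m => U a b e m * sm n (fun t => U c t m t))) by (intros; apply sm_scal_l).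
  ring.
Qed.

Lemma semisymmetric_identity2 a b c e : (a < n)%nat -> (b < n)%nat -> (c < n)%nat ->
  (e < n)%nat ->
  sm n (fun m => Ri a m * U b c e m)
  + sm n (fun m => Ri b m * U c a e m)
  + sm n (fun m => Ri c m * U a b e m) = 0.
Proof.
  intros Ha Hb Hc He.
  transitivity ((sm n (fun m => U a b c m * Ri m e) + sm n (fun m => U a b e m * Ri c m))
    - (sm n (fun m => U a c b m * Ri m e) + sm n (fun m => U a c e m * Ri b m))
    + (sm n (fun m => U b c a m * Ri m e) + sm n (fun m => U b c e m * Ri a m))).
  - rewrite <- !sm_plus, <- sm_minus, <- !sm_plus. apply sm_ext; intros m _.
    rewrite (Rup_antisym n g ginv c a e m), (Rup_exchange a b c m). ring.
  - rewrite !RdotR_trace by auto. ring.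
Qed.

Lemma semisymmetric_identity3 a b c e : (a < n)%nat -> (b < n)%nat -> (c < n)%nat ->
  (e < n)%nat ->
  sm n (fun m => Ri a m * U b e c m)
  - sm n (fun m => Ri b m * U a c e m)
  + sm n (fun m => Ri c m * U e b a m)
  - sm n (fun m => Ri e m * U c a b m) = 0.
Proof.
  intros Ha Hb Hc He.
  transitivity ((sm n (fun m => Ri a m * U b c e m) + sm n (fun m => Ri b m * U c a e m)
                 + sm n (fun m => Ri c m * U a b e m))
              + (sm n (fun m => Ri a m * U c e b m) + sm n (fun m => Ri c m * U e a b m)
                 + sm n (fun m => Ri e m * U a c b m))).
  - repeat (rewrite <- sm_plus || rewrite <- sm_minus). apply sm_ext; intros m _.
    rewrite (Rup_exchange b e c m), (Rup_exchange e b a m),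
      (Rup_antisym n g ginv c a e m), (Rup_antisym n g ginv c a b m),
      (Rup_antisym n g ginv e c b m), (Rup_antisym n g ginv b a e m).
    ring.
  - rewrite !semisymmetric_identity2 by auto. ring.
Qed.

End SemisymmetricIdentities.

Theorem mainTheorem8 (n : nat) (g ginv : metric) :
  riemannian n g ginv -> semisymmetric n g ginv ->
  forall x : pt,
  (forall a b c d e f, (a < n)%nat -> (b < n)%nat -> (c < n)%nat ->
     (d < n)%nat -> (e < n)%nat -> (f < n)%nat ->
     sm n (fun m => Rup n g ginv a b c m x * Rup n g ginv d m e f x)
   + sm n (fun m => Rup n g ginv b c d m x * Rup n g ginv a m e f x)
   + sm n (fun m => Rup n g ginv c d a m x * Rup n g ginv b m e f x)
   + sm n (fun m => Rup n g ginv d a b m x * Rup n g ginv c m e f x)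
   - sm n (fun m => Rup n g ginv a c e m x * Rup n g ginv b d m f x)
   + sm n (fun m => Rup n g ginv a c m f x * Rup n g ginv b d e m x) = 0) /\
  (forall a b c e, (a < n)%nat -> (b < n)%nat -> (c < n)%nat -> (e < n)%nat ->
     sm n (fun m => Ric n g ginv a m x * Rup n g ginv b c e m x)
   + sm n (fun m => Ric n g ginv b m x * Rup n g ginv c a e m x)
   + sm n (fun m => Ric n g ginv c m x * Rup n g ginv a b e m x) = 0) /\
  (forall a b c e, (a < n)%nat -> (b < n)%nat -> (c < n)%nat -> (e < n)%nat ->
     sm n (fun m => Ric n g ginv a m x * Rup n g ginv b e c m x)
   - sm n (fun m => Ric n g ginv b m x * Rup n g ginv a c e m x)
   + sm n (fun m => Ric n g ginv c m x * Rup n g ginv e b a m x)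
   - sm n (fun m => Ric n g ginv e m x * Rup n g ginv c a b m x) = 0).
Proof.
  intros HR HS x. split; [|split]; intros.
  - apply semisymmetric_identity1; auto.
  - apply semisymmetric_identity2; auto.
  - apply semisymmetric_identity3; auto.
Qed.
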